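(* Let $r>0$ and let $Z$ be a set of homeomorphisms $[0,r)\to[0,r)$ such that: $(\alpha)z\ge\alpha$ for all $z\in Z$ and $\alpha\in[0,r)$; $\mathrm{supp}(z)$ is an interval for every $z\in Z$; and $\bigcup_{z\in Z}\mathrm{supp}(z)$ is dense in $(0,r)$. Let $f$ be a permutation of $[0,r)$ that commutes with every $z\in Z$, is right-continuous at every point of $[0,r)$, and has finitely many points of discontinuity. Then $f$ is continuous.
   Context: Maps act on the right. For a permutation $x$ of a set $S$, $\mathrm{fix}(x)$ is its set of fixed points and $\mathrm{supp}(x)=S\setminus\mathrm{fix}(x)$. *)

From Stdlib Require Import Reals List.
Open Scope R_scope.

(* The half-open interval [0,r) as a predicate on R. Maps on [0,r) are
   represented by functions R -> R; only their values on [0,r) matter. *)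
Definition Ico0 (r : R) (x : R) : Prop := 0 <= x < r.

Definition maps_into (r : R) (f : R -> R) : Prop :=
  forall x, Ico0 r x -> Ico0 r (f x).

Definition cont_at (r : R) (f : R -> R) (x : R) : Prop :=
  forall eps, 0 < eps -> exists delta, 0 < delta /\
    forall y, Ico0 r y -> Rabs (y - x) < delta -> Rabs (f y - f x) < eps.

Definition right_cont_at (r : R) (f : R -> R) (x : R) : Prop :=
  forall eps, 0 < eps -> exists delta, 0 < delta /\
    forall y, Ico0 r y -> x <= y -> y - x < delta -> Rabs (f y - f x) < eps.

Definition continuous_on (r : R) (f : R -> R) : Prop :=
  forall x, Ico0 r x -> cont_at r f x.

Definition is_perm (r : R) (f : R -> R) : Prop :=
  maps_into r f /\
  (forall x y, Ico0 r x -> Ico0 r y -> f x = f y -> x = y) /\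
  (forall y, Ico0 r y -> exists x, Ico0 r x /\ f x = y).

Definition is_homeo (r : R) (z : R -> R) : Prop :=
  maps_into r z /\ continuous_on r z /\
  exists g : R -> R, maps_into r g /\ continuous_on r g /\
    (forall x, Ico0 r x -> g (z x) = x) /\
    (forall y, Ico0 r y -> z (g y) = y).

Definition supp (r : R) (z : R -> R) (x : R) : Prop := Ico0 r x /\ z x <> x.

Definition is_interval (A : R -> Prop) : Prop :=
  forall a b c, A a -> A b -> a <= c <= b -> A c.

Definition dense_in_0r (r : R) (A : R -> Prop) : Prop :=
  forall x, 0 < x < r -> forall eps, 0 < eps ->
    exists y, A y /\ Rabs (y - x) < eps.

Definition finitely_many_discont (r : R) (f : R -> R) : Prop :=
  exists l : list R, forall x, Ico0 r x -> ~ cont_at r f x -> In x l.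

(* Suppose f is discontinuous at x.  Since f = z^-1 o f o z, every z-image of a
   discontinuity is a discontinuity; the z-orbit of x is strictly increasing
   unless z x = x, so finiteness forces every z in Z to fix x.  Hence x > 0,
   and each support supp(z), an interval avoiding x, lies on one side of x;
   f preserves supp(z), hence f preserves the side of x of support points.
   Just left of x, f is continuous and injective, hence monotone, and the pair
   t < z t with f t < z (f t) = f (z t) shows it is increasing.  Orbits of z
   (resp. z^-1) inside a support leave every bounded part of the support,
   because the limit of a bounded orbit would be a fixed point.  Pulling such
   orbits back by f gives support points arbitrarily close to x on the right
   whose images stay near x (so f x <= x; the other inequality is direct), and
   support points left of x whose images approach x, which together with
   monotonicity gives left continuity. *)

From Stdlib Require Import Reals List Lra Lia Classical Ranalysis5 FinFun.
Open Scope R_scope.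

Definition inj_on (r : R) (f : R -> R) : Prop :=
  forall s t, Ico0 r s -> Ico0 r t -> f s = f t -> s = t.

Definition commute_on (r : R) (f h : R -> R) : Prop :=
  forall x, Ico0 r x -> f (h x) = h (f x).

Lemma orbit_in r h n v : maps_into r h -> Ico0 r v -> Ico0 r (Nat.iter n h v).
Proof. intros Hm Hv; induction n; simpl; auto. Qed.

Lemma orbit_ge r h n v : maps_into r h -> (forall t, Ico0 r t -> t <= h t) ->
  Ico0 r v -> v <= Nat.iter n h v.
Proof.
  intros Hm Hup Hv; induction n; simpl; [lra|].
  specialize (Hup _ (orbit_in r h n v Hm Hv)); lra.
Qed.

Lemma orbit_le r h n v : maps_into r h -> (forall t, Ico0 r t -> h t <= t) ->
  Ico0 r v -> Nat.iter n h v <= v.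
Proof.
  intros Hm Hdown Hv; induction n; simpl; [lra|].
  specialize (Hdown _ (orbit_in r h n v Hm Hv)); lra.
Qed.

Lemma orbit_commute r f h n u : maps_into r h -> commute_on r f h -> Ico0 r u ->
  f (Nat.iter n h u) = Nat.iter n h (f u).
Proof.
  intros Hm Hc Hu; induction n; simpl; auto.
  rewrite Hc by (apply orbit_in; auto). now rewrite IHn.
Qed.

Lemma cv_const c : Un_cv (fun _ => c) c.
Proof.
  intros eps Heps; exists 0%nat; intros n _.
  unfold Rdist; rewrite Rminus_diag, Rabs_R0; exact Heps.
Qed.

Lemma orbit_limit_fixed r h v L : maps_into r h -> Ico0 r v -> Ico0 r L ->
  cont_at r h L -> Un_cv (fun n => Nat.iter n h v) L -> h L = L.
Proof.
  intros Hm Hv HL Hc Hcv.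
  assert (Hnext : Un_cv (fun n => h (Nat.iter n h v)) (h L)).
  { intros eps Heps.
    destruct (Hc eps Heps) as [d [Hd Hd']].
    destruct (Hcv d Hd) as [N HN].
    exists N; intros n Hn; apply Hd'; [apply orbit_in; auto | apply HN; auto]. }
  assert (Hshift : Un_cv (fun n => h (Nat.iter n h v)) L).
  { apply (CV_shift' (fun n => Nat.iter n h v) 1) in Hcv.
    apply (Un_cv_ext _ _ (fun n => f_equal (fun k => Nat.iter k h v) (Nat.add_1_r n)) L Hcv). }
  exact (UL_sequence _ _ _ Hnext Hshift).
Qed.

Lemma orbit_escapes_up r h (I : R -> Prop) v w :
  maps_into r h -> continuous_on r h -> (forall t, Ico0 r t -> t <= h t) ->
  is_interval I -> (forall t, I t -> Ico0 r t /\ h t <> t) ->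
  I v -> I w -> exists n, w < Nat.iter n h v.
Proof.
  intros Hm Hc Hup HI Hfree Hv Hw.
  apply NNPP; intro Hno.
  assert (Hbd : forall n, Nat.iter n h v <= w)
    by (intro n; apply Rnot_lt_le; intro; apply Hno; eauto).
  destruct (Hfree v Hv) as [Hv0 _]; destruct (Hfree w Hw) as [Hw0 _].
  assert (Hgrow : Un_growing (fun n => Nat.iter n h v))
    by (intro n; simpl; apply Hup, orbit_in; auto).
  destruct (growing_cv _ Hgrow) as [L HL].
  { exists w; intros y [n ->]; apply Hbd. }
  assert (HvL := growing_ineq _ _ Hgrow HL 0%nat); simpl in HvL.
  assert (HLw := Rle_cv_lim Hbd HL (cv_const w)).
  destruct (Hfree L (HI v w L Hv Hw (conj HvL HLw))) as [HL0 Hne].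
  exact (Hne (orbit_limit_fixed r h v L Hm Hv0 HL0 (Hc L HL0) HL)).
Qed.

Lemma orbit_escapes_down r h (I : R -> Prop) v w :
  maps_into r h -> continuous_on r h -> (forall t, Ico0 r t -> h t <= t) ->
  is_interval I -> (forall t, I t -> Ico0 r t /\ h t <> t) ->
  I v -> I w -> exists n, Nat.iter n h v < w.
Proof.
  intros Hm Hc Hdown HI Hfree Hv Hw.
  apply NNPP; intro Hno.
  assert (Hbd : forall n, w <= Nat.iter n h v)
    by (intro n; apply Rnot_lt_le; intro; apply Hno; eauto).
  destruct (Hfree v Hv) as [Hv0 _]; destruct (Hfree w Hw) as [Hw0 _].
  assert (Hdec : Un_decreasing (fun n => Nat.iter n h v))
    by (intro n; simpl; apply Hdown, orbit_in; auto).
  destruct (decreasing_cv _ Hdec) as [L HL].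
  { exists (- w); intros y [n ->]; unfold opp_seq; specialize (Hbd n); lra. }
  assert (HLv := decreasing_ineq _ _ Hdec HL 0%nat); simpl in HLv.
  assert (HwL := Rle_cv_lim Hbd (cv_const w) HL).
  destruct (Hfree L (HI w v L Hw Hv (conj HwL HLv))) as [HL0 Hne].
  exact (Hne (orbit_limit_fixed r h v L Hm Hv0 HL0 (Hc L HL0) HL)).
Qed.

(* An injective h >= id moving x has a strictly increasing, hence infinite,
   orbit at x: an orbit contained in a finite list is a fixed point. *)
Lemma finite_orbit_fixed r h x (l : list R) : maps_into r h -> inj_on r h ->
  (forall t, Ico0 r t -> t <= h t) -> Ico0 r x ->
  (forall n, In (Nat.iter n h x) l) -> h x = x.
Proof.
  intros Hm Hinj Hup Hx Hl. apply NNPP; intro Hne.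
  assert (Hstep : forall n, Nat.iter n h x < Nat.iter (S n) h x).
  { induction n; simpl in *.
    - specialize (Hup x Hx); lra.
    - assert (Hi := orbit_in r h n x Hm Hx).
      specialize (Hup _ (Hm _ Hi)).
      destruct (Req_dec (h (h (Nat.iter n h x))) (h (Nat.iter n h x))) as [E|E];
        [apply Hinj in E; auto; lra | lra]. }
  assert (Hmono : forall n m, (n < m)%nat -> Nat.iter n h x < Nat.iter m h x).
  { intros n m Hnm; induction Hnm; [apply Hstep|]. specialize (Hstep m); lra. }
  assert (Hinjn : Injective (fun n => Nat.iter n h x)).
  { intros n m E. destruct (Nat.lt_trichotomy n m) as [H|[H|H]]; auto;
      apply Hmono in H; simpl in E; lra. }
  assert (Hnd := Injective_map_NoDup Hinjn (seq_NoDup (S (length l)) 0)).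
  assert (Hincl : incl (map (fun n => Nat.iter n h x) (seq 0 (S (length l)))) l).
  { intros y Hy. apply in_map_iff in Hy. destruct Hy as [n [<- _]]. auto. }
  assert (Hlen := NoDup_incl_length Hnd Hincl).
  rewrite length_map, length_seq in Hlen. lia.
Qed.

Lemma list_gap_below (l : list R) x :
  exists a, a < x /\ forall t, In t l -> ~ (a < t < x).
Proof.
  induction l as [|y l IH].
  - exists (x - 1). split; [lra|]. intros t [].
  - destruct IH as [a [Ha Ht]]. destruct (Rlt_or_le y x).
    + exists (Rmax a y). split; [apply Rmax_lub_lt; auto|].
      assert (Hma := Rmax_l a y); assert (Hmy := Rmax_r a y).
      intros t [<-|Hin] Hc; [lra | apply (Ht t Hin); lra].
    + exists a. split; auto. intros t [<-|Hin] Hc; [lra | exact (Ht t Hin Hc)].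
Qed.

Lemma continuous_left_of r f x : finitely_many_discont r f -> 0 < x < r ->
  exists a, 0 <= a < x /\ forall t, a < t < x -> cont_at r f t.
Proof.
  intros [l Hl] Hx.
  destruct (list_gap_below l x) as [a [Ha Hgap]].
  exists (Rmax a 0).
  assert (Hma := Rmax_l a 0); assert (Hm0 := Rmax_r a 0).
  split; [split; [lra | apply Rmax_lub_lt; lra]|].
  intros t Ht. apply NNPP; intro Hn. apply (Hgap t); [|lra].
  apply Hl; auto. unfold Ico0; lra.
Qed.

Lemma dense_between r (A : R -> Prop) c d : 0 <= c -> c < d -> d <= r ->
  dense_in_0r r A -> exists y, A y /\ c < y < d.
Proof.
  intros Hc Hcd Hd HA.
  destruct (HA ((c + d) / 2) ltac:(lra) ((d - c) / 2) ltac:(lra)) as [y [Hy Hyd]].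
  exists y; split; auto. apply Rabs_def2 in Hyd; lra.
Qed.

Lemma cont_comp r h1 h2 t : Ico0 r t -> maps_into r h1 -> cont_at r h1 t ->
  cont_at r h2 (h1 t) -> cont_at r (fun y => h2 (h1 y)) t.
Proof.
  intros Ht Hm H1 H2 eps He.
  destruct (H2 eps He) as [d2 [Hd2 H2']].
  destruct (H1 d2 Hd2) as [d1 [Hd1 H1']].
  exists d1; split; [exact Hd1|].
  intros y Hy Hyd. apply H2'; [apply Hm; auto | apply H1'; auto].
Qed.

Lemma cont_ext r f1 f2 t : (forall y, Ico0 r y -> f1 y = f2 y) -> Ico0 r t ->
  cont_at r f1 t -> cont_at r f2 t.
Proof.
  intros He Ht H eps Heps. destruct (H eps Heps) as [d [Hd H']].
  exists d; split; auto. intros y Hy Hyd. rewrite <- !He; auto.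
Qed.

Lemma right_cont_at_0 r f : right_cont_at r f 0 -> cont_at r f 0.
Proof.
  intros Hrc eps He. destruct (Hrc eps He) as [d [Hd Hd']].
  exists d; split; auto. intros y Hy Hyd. destruct Hy as [Hy0 Hyr].
  apply Hd'; [split|..]; auto; apply Rabs_def2 in Hyd; lra.
Qed.

Lemma cont_at_continuity_pt r f t : 0 < t < r -> cont_at r f t -> continuity_pt f t.
Proof.
  intros Ht H. unfold continuity_pt, continue_in, limit1_in, limit_in.
  intros eps Heps. destruct (H eps Heps) as [d [Hd H']].
  exists (Rmin d (Rmin t (r - t))). split.
  - apply Rmin_pos; auto. apply Rmin_pos; lra.
  - intros y [_ Hy]. simpl in *. unfold Rdist in *.
    assert (Hm1 := Rmin_l d (Rmin t (r - t))). assert (Hm2 := Rmin_r d (Rmin t (r - t))).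
    assert (Hm3 := Rmin_l t (r - t)). assert (Hm4 := Rmin_r t (r - t)).
    apply Rabs_def2 in Hy. apply H'; [unfold Ico0|apply Rabs_def1]; lra.
Qed.

Lemma segment_in_interval a b s t l : a < s < b -> a < t < b -> 0 <= l <= 1 ->
  a < s + l * (t - s) < b.
Proof.
  intros Hs Ht Hl.
  assert (0 <= l * (t - a)) by (apply Rmult_le_pos; lra).
  assert (0 <= (1 - l) * (s - a)) by (apply Rmult_le_pos; lra).
  assert (0 <= l * (b - t)) by (apply Rmult_le_pos; lra).
  assert (0 <= (1 - l) * (b - s)) by (apply Rmult_le_pos; lra).
  split; nra.
Qed.

(* Otherwise, moving the pair
   (p,q) linearly to a decreasing pair (u,v) keeps it ordered, and by the
   intermediate value theorem the two images meet at some stage. *)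
Lemma continuous_injective_increasing r f a b p q : 0 <= a -> b <= r ->
  (forall t, a < t < b -> cont_at r f t) -> inj_on r f ->
  a < p -> p < q -> q < b -> f p < f q ->
  forall u v, a < u -> u < v -> v < b -> f u < f v.
Proof.
  intros Ha Hb Hc Hinj Hap Hpq Hqb Hf u v Hau Huv Hvb.
  destruct (Rlt_or_le (f u) (f v)) as [|Hle]; auto. exfalso.
  assert (Hne : f u <> f v) by (intro E; apply Hinj in E; unfold Ico0; lra).
  set (P := fun l => p + l * (u - p)); set (Q := fun l => q + l * (v - q)).
  assert (HP : forall l, 0 <= l <= 1 -> a < P l < b)
    by (intros; apply segment_in_interval; lra).
  assert (HQ : forall l, 0 <= l <= 1 -> a < Q l < b)
    by (intros; apply segment_in_interval; lra).
  set (H := fun l => f (P l) - f (Q l)).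
  assert (Hcont : forall l, 0 <= l <= 1 -> continuity_pt H l).
  { intros l Hl. specialize (HP l Hl); specialize (HQ l Hl).
    apply continuity_pt_minus;
      (apply continuity_pt_comp; [unfold P, Q; reg | apply (cont_at_continuity_pt r);
        [lra | apply Hc; lra]]). }
  assert (H0 : H 0 < 0) by (unfold H, P, Q; rewrite !Rmult_0_l, !Rplus_0_r; lra).
  assert (H1 : 0 < H 1)
    by (unfold H, P, Q; replace (p + 1 * (u - p)) with u by ring;
        replace (q + 1 * (v - q)) with v by ring; lra).
  destruct (IVT_interv H 0 1 Hcont ltac:(lra) H0 H1) as [l [Hl Hz]].
  specialize (HP l Hl); specialize (HQ l Hl).
  assert (E : P l = Q l) by (apply Hinj; unfold Ico0, H in *; lra).
  unfold P, Q in E.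
  destruct (Req_dec l 1) as [->|Hl1]; [lra|].
  assert (0 < (q - p) * (1 - l)) by (apply Rmult_lt_0_compat; lra).
  assert (0 <= l * (v - u)) by (apply Rmult_le_pos; lra).
  nra.
Qed.

Lemma supp_left_of_fixed r z x y u : is_interval (supp r z) -> z x = x ->
  supp r z y -> supp r z u -> y < x -> u < x.
Proof.
  intros HI Hx Hy Hu Hyx. apply Rnot_le_lt; intro Hxu.
  destruct (HI y u x Hy Hu ltac:(lra)) as [_ Hne]; auto.
Qed.

Lemma supp_right_of_fixed r z x y u : is_interval (supp r z) -> z x = x ->
  supp r z y -> supp r z u -> x < y -> x < u.
Proof.
  intros HI Hx Hy Hu Hxy. apply Rnot_le_lt; intro Hux.
  destruct (HI u y x Hu Hy ltac:(lra)) as [_ Hne]; auto.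
Qed.

Lemma supp_commute_iff r z h v : maps_into r z -> maps_into r h -> inj_on r h ->
  commute_on r h z -> Ico0 r v -> supp r z (h v) <-> supp r z v.
Proof.
  intros Hzm Hm Hinj Hc Hv. split.
  - intros [_ Hne]. split; auto. intro E. apply Hne. now rewrite <- Hc, E.
  - intros [_ Hne]. split; [apply Hm; auto|]. intro E. apply Hne.
    apply Hinj; auto. now rewrite Hc.
Qed.

Lemma supp_orbit r z h n y : maps_into r z -> maps_into r h -> inj_on r h ->
  commute_on r h z -> supp r z y -> supp r z (Nat.iter n h y).
Proof.
  intros Hzm Hm Hinj Hc Hy. induction n; simpl; auto.
  apply supp_commute_iff; auto. apply IHn.
Qed.

Lemma homeo_inj r z : is_homeo r z -> inj_on r z.
Proof.
  intros [_ [_ [g [_ [_ [Hgz _]]]]]] s t Hs Ht E.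
  now rewrite <- (Hgz s Hs), <- (Hgz t Ht), E.
Qed.

Lemma commute_inverse r f z g : maps_into r f -> maps_into r g ->
  (forall x, Ico0 r x -> g (z x) = x) -> (forall y, Ico0 r y -> z (g y) = y) ->
  commute_on r f z -> commute_on r f g.
Proof.
  intros Hfm Hgm Hgz Hzg Hc x Hx.
  rewrite <- (Hzg x Hx) at 2. rewrite Hc, Hgz; auto.
Qed.

(* f = z^-1 o f o z, so continuity of f at z t gives continuity at t. *)
Lemma cont_at_conjugate r z f t : is_homeo r z -> maps_into r f ->
  commute_on r f z -> Ico0 r t -> cont_at r f (z t) -> cont_at r f t.
Proof.
  intros [Hzm [Hzc [g [Hgm [Hgc [Hgz _]]]]]] Hfm Hc Ht H.
  apply (cont_ext r (fun y => g (f (z y)))); auto.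
  - intros y Hy. rewrite Hc; auto.
  - apply (cont_comp r (fun y => f (z y)) g); auto.
    + intros y Hy; auto.
    + apply cont_comp; auto.
Qed.

Section Lemma3p2.

Variables (r : R) (Z : (R -> R) -> Prop) (f : R -> R).
Hypothesis HZhomeo : forall z, Z z -> is_homeo r z.
Hypothesis HZup : forall z a, Z z -> Ico0 r a -> z a >= a.
Hypothesis HZint : forall z, Z z -> is_interval (supp r z).
Hypothesis Hdense : dense_in_0r r (fun x => exists z, Z z /\ supp r z x).
Hypothesis Hf_maps : maps_into r f.
Hypothesis Hf_inj : inj_on r f.
Hypothesis Hf_surj : forall y, Ico0 r y -> exists x, Ico0 r x /\ f x = y.
Hypothesis Hcomm : forall z, Z z -> commute_on r f z.
Hypothesis Hrc : forall x, Ico0 r x -> right_cont_at r f x.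

Lemma Z_up z t : Z z -> Ico0 r t -> t <= z t.
Proof. intros Hz Ht. apply Rge_le, HZup; auto. Qed.

Lemma supp_f_iff z v : Z z -> Ico0 r v -> supp r z (f v) <-> supp r z v.
Proof.
  intros Hz; destruct (HZhomeo z Hz) as [Hzm _]. apply supp_commute_iff; auto.
Qed.

Lemma discont_fixed x : finitely_many_discont r f -> Ico0 r x -> ~ cont_at r f x ->
  forall z, Z z -> z x = x.
Proof.
  intros [l Hl] Hx Hnc z Hz.
  assert (Hzm : maps_into r z) by apply (HZhomeo z Hz).
  apply (finite_orbit_fixed r z x l Hzm (homeo_inj r z (HZhomeo z Hz)));
    auto using Z_up.
  intro n. apply Hl; [apply orbit_in; auto|].
  induction n; simpl; auto. intro Hc. apply IHn.
  apply (cont_at_conjugate r z); auto. apply orbit_in; auto.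
Qed.

Variable x : R.
Hypothesis Hx : Ico0 r x.
Hypothesis Hfix : forall z, Z z -> z x = x.

Lemma f_keeps_left z y : Z z -> supp r z y -> y < x -> f y < x.
Proof.
  intros Hz Hy Hyx. apply (supp_left_of_fixed r z x y); auto.
  apply supp_f_iff; auto. apply Hy.
Qed.

Lemma f_keeps_right z y : Z z -> supp r z y -> x < y -> x < f y.
Proof.
  intros Hz Hy Hxy. apply (supp_right_of_fixed r z x y); auto.
  apply supp_f_iff; auto. apply Hy.
Qed.

(* Right continuity and support points just right of x give f x >= x. *)
Lemma f_fixed_ge : x <= f x.
Proof.
  apply Rnot_lt_le; intro Hlt.
  destruct (Hrc x Hx (x - f x) ltac:(lra)) as [d [Hd Hd']].
  destruct Hx as [Hx0 Hxr].
  assert (Hm := Rmin_l (x + d) r); assert (Hm' := Rmin_r (x + d) r).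
  destruct (dense_between r _ x (Rmin (x + d) r) Hx0
      ltac:(apply Rmin_glb_lt; lra) Hm' Hdense) as [y [[z [Hz Hy]] Hyb]].
  assert (Hfy := f_keeps_right z y Hz Hy ltac:(lra)).
  specialize (Hd' y (proj1 Hy) ltac:(lra) ltac:(lra)). apply Rabs_def2 in Hd'. lra.
Qed.

(* Pulling back a z^-1-orbit by f gives support points right of x, close to x,
   with images close to x; so f x <= x. *)
Lemma f_fixed_le : f x <= x.
Proof.
  apply Rnot_lt_le; intro Hlt.
  set (eps := (f x - x) / 2).
  destruct (Hrc x Hx eps ltac:(unfold eps; lra)) as [d [Hd Hd']].
  destruct Hx as [Hx0 Hxr].
  set (c := Rmin (Rmin (x + d) (x + eps)) r).
  assert (Hc1 := Rmin_l (Rmin (x + d) (x + eps)) r).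
  assert (Hc2 := Rmin_r (Rmin (x + d) (x + eps)) r).
  assert (Hc3 := Rmin_l (x + d) (x + eps)); assert (Hc4 := Rmin_r (x + d) (x + eps)).
  assert (Hxc : x < c) by (unfold c; repeat apply Rmin_glb_lt; unfold eps; lra).
  destruct (dense_between r _ x c Hx0 Hxc Hc2 Hdense) as [w [[z [Hz Hw]] Hwb]].
  destruct (HZhomeo z Hz) as [Hzm [Hzc [g [Hgm [Hgc [Hgz Hzg]]]]]].
  destruct (Hf_surj w (proj1 Hw)) as [v [Hv Hfv]].
  assert (Hvs : supp r z v) by (apply (supp_f_iff z v Hz Hv); now rewrite Hfv).
  assert (Hg_down : forall t, Ico0 r t -> g t <= t).
  { intros t Ht. rewrite <- (Hzg t Ht) at 2. apply Z_up; auto. }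
  assert (Hg_inj : inj_on r g).
  { intros s t Hs Ht E. now rewrite <- (Hzg s Hs), <- (Hzg t Ht), E. }
  assert (Hg_comm : commute_on r g z) by (intros t Ht; rewrite Hgz, Hzg; auto).
  destruct (orbit_escapes_down r g (supp r z) v w) as [n Hn]; auto.
  { intros t [Ht Hne]; split; auto. intro E. apply Hne.
    rewrite <- E at 1. apply Hzg; auto. }
  assert (Hs := supp_orbit r z g n v Hzm Hgm Hg_inj Hg_comm Hvs).
  assert (Hxs := supp_right_of_fixed r z x w _ (HZint z Hz) (Hfix z Hz) Hw Hs ltac:(lra)).
  assert (Hfs : f (Nat.iter n g v) = Nat.iter n g w).
  { rewrite <- Hfv. apply (orbit_commute r); auto. apply (commute_inverse r f z); auto. }
  assert (Hsw := orbit_le r g n w Hgm Hg_down (proj1 Hw)).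
  unfold c in Hwb.
  specialize (Hd' _ (proj1 Hs) ltac:(lra) ltac:(lra)). apply Rabs_def2 in Hd'.
  unfold eps in *. lra.
Qed.

Variable a : R.
Hypothesis Ha : 0 <= a < x.
Hypothesis Hcont_left : forall t, a < t < x -> cont_at r f t.

(* f is increasing on (a,x): t < z t and f t < z (f t) = f (z t). *)
Lemma f_increasing_left u v : a < u -> u < v -> v < x -> f u < f v.
Proof.
  destruct (dense_between r _ a x (proj1 Ha) (proj2 Ha) ltac:(destruct Hx; lra) Hdense)
    as [t [[z [Hz Ht]] Htb]].
  destruct (HZhomeo z Hz) as [Hzm _].
  assert (Hzs : supp r z (z t))
    by (apply (supp_orbit r z z 1 t Hzm Hzm (homeo_inj r z (HZhomeo z Hz)) (fun _ _ => eq_refl) Ht)).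
  assert (Hztx := supp_left_of_fixed r z x t (z t) (HZint z Hz) (Hfix z Hz) Ht Hzs ltac:(lra)).
  assert (Htz : t < z t) by (destruct Ht as [Ht Hne]; specialize (Z_up z t Hz Ht); lra).
  assert (Hf2 : f t < f (z t)).
  { rewrite (Hcomm z Hz t (proj1 Ht)).
    destruct (proj2 (supp_f_iff z t Hz (proj1 Ht)) Ht) as [Hft Hne].
    specialize (Z_up z (f t) Hz Hft); lra. }
  apply (continuous_injective_increasing r f a x t (z t)); auto; try lra.
  destruct Hx; lra.
Qed.

Lemma f_below_left y : a < y < x -> f y < x.
Proof.
  intros Hy.
  destruct (dense_between r _ y x ltac:(lra) ltac:(lra) ltac:(destruct Hx; lra) Hdense)
    as [y' [[z [Hz Hy']] Hyb]].
  assert (f y < f y') by (apply f_increasing_left; lra).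
  assert (f y' < x) by (apply (f_keeps_left z); auto; lra).
  lra.
Qed.

(* Pulling back a z-orbit by f gives a support point s < x with f s > x - eps;
   monotonicity on (s,x) then gives left continuity of f at the fixed point x. *)
Lemma cont_at_fixed_point : f x = x -> cont_at r f x.
Proof.
  intros Hfx eps Heps.
  destruct (Hrc x Hx eps Heps) as [dR [HdR HdR']].
  assert (Hm1 := Rmax_l a (x - eps)); assert (Hm2 := Rmax_r a (x - eps)).
  destruct (dense_between r _ (Rmax a (x - eps)) x ltac:(lra)
      ltac:(apply Rmax_lub_lt; lra) ltac:(destruct Hx; lra) Hdense)
    as [w [[z [Hz Hw]] Hwb]].
  destruct (HZhomeo z Hz) as [Hzm [Hzc _]].
  destruct (Hf_surj w (proj1 Hw)) as [v [Hv Hfv]].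
  assert (Hvs : supp r z v) by (apply (supp_f_iff z v Hz Hv); now rewrite Hfv).
  destruct (orbit_escapes_up r z (supp r z) v w) as [n Hn]; auto using Z_up.
  assert (Hz_inj := homeo_inj r z (HZhomeo z Hz)).
  assert (Hs := supp_orbit r z z n v Hzm Hzm Hz_inj (fun _ _ => eq_refl) Hvs).
  assert (Hsx := supp_left_of_fixed r z x w _ (HZint z Hz) (Hfix z Hz) Hw Hs ltac:(lra)).
  assert (Hfs : f (Nat.iter n z v) = Nat.iter n z w)
    by (rewrite <- Hfv; apply (orbit_commute r); auto).
  assert (Hws := orbit_ge r z n w Hzm (fun t Ht => Z_up z t Hz Ht) (proj1 Hw)).
  set (s := Nat.iter n z v) in *.
  exists (Rmin dR (x - s)). split; [apply Rmin_pos; lra|].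
  intros y Hy Hyd.
  assert (Hd1 := Rmin_l dR (x - s)); assert (Hd2 := Rmin_r dR (x - s)).
  apply Rabs_def2 in Hyd.
  destruct (Rle_or_lt x y) as [Hxy|Hxy]; [apply HdR'; auto; lra|].
  assert (f s < f y) by (apply f_increasing_left; lra).
  assert (f y < x) by (apply f_below_left; lra).
  rewrite Hfx. apply Rabs_def1; lra.
Qed.

End Lemma3p2.

Theorem lemma3p2 (r : R) (Z : (R -> R) -> Prop) (f : R -> R) :
  0 < r ->
  (forall z, Z z -> is_homeo r z) ->
  (forall z a, Z z -> Ico0 r a -> z a >= a) ->
  (forall z, Z z -> is_interval (supp r z)) ->
  dense_in_0r r (fun x => exists z, Z z /\ supp r z x) ->
  is_perm r f ->
  (forall z x, Z z -> Ico0 r x -> f (z x) = z (f x)) ->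
  (forall x, Ico0 r x -> right_cont_at r f x) ->
  finitely_many_discont r f ->
  continuous_on r f.
Proof.
  intros _ HZh HZup HZint Hdense [Hfm [Hfinj Hfsurj]] Hcomm' Hrc Hfin x Hx.
  assert (Hcomm : forall z, Z z -> commute_on r f z)
    by (intros z Hz t Ht; apply Hcomm'; auto).
  apply NNPP; intro Hnc.
  assert (Hfix : forall z, Z z -> z x = x) by (eapply discont_fixed; eauto).
  assert (Hx0 : 0 < x).
  { destruct Hx as [[Hpos| <-] Hxr]; auto.
    exfalso; apply Hnc, right_cont_at_0, Hrc; split; lra. }
  destruct (continuous_left_of r f x Hfin ltac:(destruct Hx; lra)) as [a [Ha Hca]].
  assert (Hfx : f x = x)
    by (apply Rle_antisym; [eapply f_fixed_le | eapply f_fixed_ge]; eauto).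
  apply Hnc; eapply cont_at_fixed_point; eauto.
Qed.
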